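(* Let $A\subsetneq\mathbb{R}^n$ be an affine subspace defined by linear equations with integer coefficients, and let $A_{\ge}$ be a closed half-space in $A$ defined by a non-strict linear inequality with integer coefficients. Then $A_{\ge}$ is a tropical prevariety in $\mathbb{R}^n$.
   Context: A tropical polynomial $f$ in $n$ variables is a function $f(x)=\min\{L_1(x),\dots,L_m(x)\}$ on $\mathbb{R}^n$, where each $L_j(x)=\sum_{i=1}^n a_{ji}x_i+b_j$ has non-negative integer coefficients $a_{ji}$ and real constant term $b_j$. The tropical hypersurface $V(f)$ is the set of points where this piecewise-linear function is not smooth. A tropical prevariety is a set of the form $V(f_1)\cap\cdots\cap V(f_k)$ for finitely many tropical polynomials $f_1,\dots,f_k$. *)

From HB Require Import structures.
From mathcomp Require Import all_boot all_order all_algebra.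
From mathcomp Require Import all_classical all_reals all_analysis.
Set Implicit Arguments. Unset Strict Implicit. Unset Printing Implicit Defensive.
Import Order.TTheory GRing.Theory Num.Theory.
Import numFieldNormedType.Exports.
Local Open Scope classical_set_scope.
Local Open Scope ring_scope.

Definition trop_term (R : realType) (n : nat) := ({ffun 'I_n -> nat} * R)%type.

Definition trop_lin (R : realType) (n : nat) (t : trop_term R n) (x : 'rV[R]_n) : R :=
  \sum_(i < n) (t.1 i)%:R * x ord0 i + t.2.

(* A tropical polynomial is given by a NONEMPTY list of terms L_1,...,L_m;
   its value is min { L_1(x), ..., L_m(x) }. *)
Definition trop_poly (R : realType) (n : nat) := seq (trop_term R n).

Definition trop_eval (R : realType) (n : nat) (f : trop_poly R n) (x : 'rV[R]_n) : R :=
  match f with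
  | [::] => 0
  | t :: f' => foldr (fun s acc => Order.min (trop_lin s x) acc) (trop_lin t x) f'
  end.

Definition trop_hypersurface (R : realType) (n : nat) (f : trop_poly R n) : set 'rV[R]_n :=
  [set x | ~ differentiable (trop_eval f) x].

Definition trop_prevariety (R : realType) (n : nat) (S : set 'rV[R]_n) : Prop :=
  exists fs : seq (trop_poly R n),
    (forall f, f \in fs -> f != [::]) /\
    S = [set x | forall f, f \in fs -> trop_hypersurface f x].

Definition int_lin (R : realType) (n : nat) (a : 'I_n -> int) (x : 'rV[R]_n) : R :=
  \sum_(j < n) (a j)%:~R * x ord0 j.

From HB Require Import structures.
From mathcomp Require Import all_boot all_order all_algebra.
From mathcomp Require Import all_classical all_reals all_analysis.
From mathcomp Require Import lra.
Set Implicit Arguments. Unset Strict Implicit. Unset Printing Implicit Defensive.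
Import Order.TTheory GRing.Theory Num.Theory.
Import numFieldNormedType.Exports.
Local Open Scope classical_set_scope.
Local Open Scope ring_scope.

(* A tropical polynomial is affine near a point where a single term attains
   the minimum, while two minimizing terms with different exponents force two
   different differentials.  Splitting an integer vector as a = a+ - a- with
   a+, a- in N^n, the binomial min(a+ x, a- x + c) therefore cuts out the
   hyperplane a x = c.  On that hyperplane the first two terms of
     min(a+ x + b- x + d, a- x + b- x + c + d, a+ x + b+ x)
   coincide and have different exponents, so this trinomial is non-smooth
   exactly where a+ x + b- x + d <= a+ x + b+ x, i.e. where b x >= d.  The
   half-space is the intersection of its hypersurface with those of the
   nonzero equations; the zero equations are redundant since A is nonempty. *)

Section Differential.
Variables (R : realType) (V : normedModType R).

Lemma near_eq_differentiable (W : normedModType R) (f g : V -> W) (x : V) :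
  {near x, f =1 g} -> differentiable f x -> differentiable g x.
Proof.
move=> fg df; have gx : f x = g x by exact: (nbhs_singleton fg).
apply/diffP; apply: (@getPex _ (fun (l : {linear V -> W}) => continuous l /\
  forall y, g y = g (lim (nbhs x)) + l (y - lim (nbhs x))
                  +o_(y \near x) (y - lim (nbhs x)))).
exists ('d f x); split; first exact: diff_continuous.
have /diffP [_ fE] := df; rewrite lim_id in fE *; last exact: norm_hausdorff.
have /eqadd_some_oP fo := funext fE.
suff gE : g = (fun y => g x + 'd f x (y - x)) +o_ (nbhs x) (fun y => y - x).
  by move=> y; rewrite {1}gE.
apply/eqaddoP => e e0; apply: filterS2 fg (fo e e0) => y fgy /=.
by rewrite !fctE fgy gx.
Qed.

Lemma diff_eq_of_le_linear (f : V -> R) (u : {linear V -> R}) (x : V) :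
  differentiable f x -> (forall y, f y <= f x + u (y - x)) -> 'd f x =1 u.
Proof.
move=> df fu.
have dfu v : 'd f x v <= u v.
  rewrite -deriveE // /derive.
  apply: cvgr_to_le (cvg_dnbhs_at_right (diff_derivable (v := v) df)) _.
  near=> h; have h0 : 0 < h by near: h; exact: nbhs_right_gt.
  rewrite /= ler_pdivrMl // lerBlDl (le_trans (fu _)) //.
  by rewrite addrK linearZ.
move=> v; apply/eqP; rewrite eq_le dfu /= -lerN2 -!linearN dfu.
Unshelve. all: by end_near. Qed.

End Differential.

Lemma filter_forall_seq (T : eqType) (U : Type) (F : set_system U) {FF : Filter F}
    (P : T -> U -> Prop) (l : seq T) :
  (forall t, t \in l -> \forall y \near F, P t y) ->
  \forall y \near F, forall t, t \in l -> P t y.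
Proof.
elim: l => [_|t l IH Pl]; first by apply: filterE => y t.
have Pl' : \forall y \near F, forall t', t' \in l -> P t' y.
  by apply: IH => t' tl; apply: Pl; rewrite inE tl orbT.
apply: filterS2 (Pl t (mem_head t l)) Pl' => y Pty Ply t'.
by rewrite inE => /predU1P [->|]; last exact: Ply.
Qed.

Section TropicalPolynomial.
Variables (R : realType) (n : nat).
Implicit Types (f : trop_poly R n) (s t : trop_term R n) (u v : {ffun 'I_n -> nat})
  (x y : 'rV[R]_n).

Definition nat_lin u x : R := \sum_(i < n) (u i)%:R * x ord0 i.

Lemma nat_lin_is_linear u : linear (nat_lin u).
Proof.
move=> a x y; rewrite /nat_lin scaler_sumr -big_split; apply: eq_bigr => i _.
by rewrite !mxE mulrDr mulrCA.
Qed.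

HB.instance Definition _ u :=
  GRing.isLinear.Build R 'rV[R]_n R *:%R (nat_lin u) (nat_lin_is_linear u).

Lemma trop_linE s x : trop_lin s x = nat_lin s.1 x + s.2.
Proof. by []. Qed.

Lemma nat_linD u v x : nat_lin (u + v) x = nat_lin u x + nat_lin v x.
Proof.
by rewrite /nat_lin -big_split; apply: eq_bigr => i _; rewrite ffunE natrD mulrDl.
Qed.

Lemma nat_lin_delta u j : nat_lin u (delta_mx 0 j) = (u j)%:R.
Proof.
rewrite /nat_lin (bigD1 j) //= big1 => [|i /negbTE ij]; last by rewrite mxE ij andbF mulr0.
by rewrite mxE !eqxx mulr1 addr0.
Qed.

Lemma nat_lin_inj u v : nat_lin u =1 nat_lin v -> u = v.
Proof.
by move=> uv; apply/ffunP => j; apply/eqP; rewrite -(eqr_nat R) -!nat_lin_delta uv.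
Qed.

Lemma differentiable_trop_lin s x : differentiable (trop_lin s) x.
Proof.
have -> : trop_lin s = \sum_(i < n) (cst (s.1 i)%:R * (fun y => y ord0 i)) + cst s.2.
  by apply/funext => y; rewrite /trop_lin !fctE fct_sumE.
apply: differentiableD; last exact: differentiable_cst.
apply: differentiable_sum => i; apply: differentiableM; first exact: differentiable_cst.
exact: differentiable_coord.
Qed.

Lemma trop_eval_cons t f x :
  trop_eval (t :: f) x = \big[Order.min/trop_lin t x]_(s <- f) trop_lin s x.
Proof. by elim: f => [|s f IH]; rewrite ?big_nil // big_cons -IH. Qed.

Lemma trop_eval_le f s x : s \in f -> trop_eval f x <= trop_lin s x.
Proof.
case: f => [//|t f]; rewrite trop_eval_cons inE => /predU1P [->|sf].
  exact: bigmin_le_id.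
exact: ge_bigmin_seq.
Qed.

Lemma trop_eval_attained f x :
  f != [::] -> exists2 s, s \in f & trop_eval f x = trop_lin s x.
Proof.
case: f => [//|t f] _; rewrite trop_eval_cons; elim: f => [|s f [s' s'f IH]].
  by exists t; rewrite ?big_nil ?mem_head.
rewrite big_cons IH /Order.min; case: ifP => _.
  by exists s; rewrite // !inE eqxx orbT.
by exists s' => //; move: s'f; rewrite !inE => /predU1P [->|->]; rewrite ?eqxx ?orbT.
Qed.

Lemma trop_hypersurface_of_two_minima f s1 s2 x :
  s1 \in f -> s2 \in f -> s1.1 != s2.1 ->
  trop_eval f x = trop_lin s1 x -> trop_eval f x = trop_lin s2 x ->
  trop_hypersurface f x.
Proof.
move=> s1f s2f /eqP s12 e1 e2 df; apply: s12.
have dfE s : s \in f -> trop_eval f x = trop_lin s x -> 'd (trop_eval f) x =1 nat_lin s.1.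
  move=> sf e; apply: diff_eq_of_le_linear => // y.
  rewrite e (le_trans (trop_eval_le y sf)) // !trop_linE linearB /=.
  by rewrite addrAC addrCA subrr addr0 addrC.
by apply: nat_lin_inj => v; rewrite -(dfE s1) // (dfE s2).
Qed.

Lemma differentiable_trop_eval f s x :
  s \in f -> (forall t, t \in f -> t != s -> trop_lin s x < trop_lin t x) ->
  differentiable (trop_eval f) x.
Proof.
move=> sf smin; apply: near_eq_differentiable (differentiable_trop_lin s x).
have : \forall y \near x, forall t, t \in f -> t != s -> trop_lin s y < trop_lin t y.
  pose P t y := t != s -> trop_lin s y < trop_lin t y.
  apply: (@filter_forall_seq _ _ (nbhs x) _ P) => t tf; rewrite /P.
  have [->|ts] := eqVneq t s; first by near=> y.
  have cts : {for x, continuous (trop_lin t - trop_lin s)}.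
    by apply/differentiable_continuous/differentiableB; exact: differentiable_trop_lin.
  have /cvgr_gt/(_ 0) := cts; rewrite /= subr_gt0 => /(_ (smin t tf ts)) ts_gt.
  by near=> y => _; rewrite -subr_gt0; near: y.
apply: filterS => y ymin.
have fnil : f != [::] by apply: contraTneq sf => ->.
have [t tf e] := trop_eval_attained y fnil; rewrite e.
have [-> //|ts] := eqVneq t s.
by have := trop_eval_le y sf; rewrite e leNgt ymin.
Unshelve. all: by end_near. Qed.

Lemma trop_eval_eq f s x : s \in f ->
  (forall t, t \in f -> trop_lin s x <= trop_lin t x) -> trop_eval f x = trop_lin s x.
Proof.
move=> sf smin; have fnil : f != [::] by apply: contraTneq sf => ->.
have [t tf e] := trop_eval_attained x fnil.
by apply: le_anti; rewrite trop_eval_le //= e smin.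
Qed.

Lemma trop_hypersurface2 s1 s2 x : s1.1 != s2.1 ->
  trop_hypersurface [:: s1; s2] x <-> trop_lin s1 x = trop_lin s2 x.
Proof.
have s1f : s1 \in [:: s1; s2] by rewrite mem_head.
have s2f : s2 \in [:: s1; s2] by rewrite !inE eqxx orbT.
move=> s12; split=> [Vx|e12].
  apply/eqP; apply: contra_notT Vx; rewrite neq_lt => /orP [lt12|lt21].
    apply: (differentiable_trop_eval s1f) => t.
    by rewrite !inE => /orP [/eqP ->|/eqP ->]; rewrite ?eqxx.
  apply: (differentiable_trop_eval s2f) => t.
  by rewrite !inE => /orP [/eqP ->|/eqP ->]; rewrite ?eqxx.
have e1 : trop_eval [:: s1; s2] x = trop_lin s1 x.
  by apply: trop_eval_eq => // t; rewrite !inE => /orP [/eqP ->|/eqP ->]; rewrite ?e12.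
by apply: (trop_hypersurface_of_two_minima s1f s2f s12); rewrite e1.
Qed.

Lemma trop_hypersurface3 s1 s2 s3 x : s1.1 != s2.1 -> trop_lin s1 x = trop_lin s2 x ->
  trop_hypersurface [:: s1; s2; s3] x <-> trop_lin s1 x <= trop_lin s3 x.
Proof.
have s1f : s1 \in [:: s1; s2; s3] by rewrite mem_head.
have s2f : s2 \in [:: s1; s2; s3] by rewrite !inE eqxx orbT.
have s3f : s3 \in [:: s1; s2; s3] by rewrite !inE eqxx !orbT.
move=> s12 e12; split=> [Vx|le13].
  rewrite leNgt; apply: contra_notN Vx => lt31.
  apply: (differentiable_trop_eval s3f) => t.
  by rewrite !inE => /or3P [/eqP ->|/eqP ->|/eqP ->]; rewrite -?e12 ?eqxx.
have e1 : trop_eval [:: s1; s2; s3] x = trop_lin s1 x.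
  apply: trop_eval_eq => // t.
  by rewrite !inE => /or3P [/eqP ->|/eqP ->|/eqP ->]; rewrite -?e12.
by apply: (trop_hypersurface_of_two_minima s1f s2f s12); rewrite e1.
Qed.

Lemma trop_prevariety_hypersurface f :
  f != [::] -> trop_prevariety (trop_hypersurface f).
Proof.
move=> f0; exists [:: f]; split=> [g|]; first by rewrite inE => /eqP ->.
apply/seteqP; split=> x /=; last by apply; rewrite mem_head.
by move=> Vx g; rewrite inE => /eqP ->.
Qed.

Lemma trop_prevarietyI (S T : set 'rV[R]_n) :
  trop_prevariety S -> trop_prevariety T -> trop_prevariety (S `&` T).
Proof.
move=> [fs [fs0 ->]] [gs [gs0 ->]]; exists (fs ++ gs); split=> [f|].
  by rewrite mem_cat => /orP [/fs0|/gs0].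
apply/seteqP; split=> x /=.
  by move=> [Vfs Vgs] f; rewrite mem_cat => /orP [/Vfs|/Vgs].
by move=> V; split=> f f_in; apply: V; rewrite mem_cat f_in ?orbT.
Qed.

Lemma trop_prevariety_bigcap (I : eqType) (r : seq I) (S : I -> set 'rV[R]_n) :
  (forall i, i \in r -> trop_prevariety (S i)) ->
  trop_prevariety [set x | forall i, i \in r -> S i x].
Proof.
elim: r => [_|i r IH Sr].
  by exists [::]; split=> //; apply/seteqP; split=> x.
have -> : [set x | forall j, j \in i :: r -> S j x] =
          S i `&` [set x | forall j, j \in r -> S j x].
  apply/seteqP; split=> x /=; last by move=> [Six Srx] j; rewrite inE => /predU1P [->|/Srx].
  by move=> Sx; split=> [|j jr]; apply: Sx; rewrite inE ?jr ?eqxx ?orbT.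
apply: trop_prevarietyI; first exact/Sr/mem_head.
by apply: IH => j jr; apply: Sr; rewrite inE jr orbT.
Qed.

End TropicalPolynomial.

Definition pos_part (z : int) : nat := `|Num.max z 0|%N.
Definition neg_part (z : int) : nat := pos_part (- z).

Lemma pos_partB_neg_part (R : numDomainType) (z : int) :
  (pos_part z)%:R - (neg_part z)%:R = z%:~R :> R.
Proof.
rewrite /neg_part /pos_part !natr_absz; case: (lerP 0 z) => hz.
  by rewrite max_r ?oppr_le0 // normr0 subr0 ger0_norm.
by rewrite normr0 sub0r max_l ?oppr_ge0 ?ltW // ger0_norm ?oppr_ge0 ?ltW // intrN opprK.
Qed.

Section IntegerHalfspace.
Variables (R : realType) (n : nat).
Implicit Types (a b : 'I_n -> int) (c d : R) (u : {ffun 'I_n -> nat}) (x : 'rV[R]_n).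

Definition int_pos a : {ffun 'I_n -> nat} := [ffun j => pos_part (a j)].
Definition int_neg a : {ffun 'I_n -> nat} := [ffun j => neg_part (a j)].

Lemma nat_lin_int_posB a x : nat_lin (int_pos a) x - nat_lin (int_neg a) x = int_lin a x.
Proof.
rewrite /nat_lin /int_lin -sumrB; apply: eq_bigr => j _.
by rewrite !ffunE -mulrBl pos_partB_neg_part.
Qed.

Lemma int_posD_neq a u j : a j != 0 -> int_pos a + u != int_neg a + u.
Proof.
apply: contraNneq => /ffunP /(_ j); rewrite !ffunE => /addIn aj.
by rewrite -[a j]intz -(pos_partB_neg_part int) aj subrr.
Qed.

Definition hyperplane_poly a c : trop_poly R n := [:: (int_pos a, 0); (int_neg a, c)].

Lemma hyperplane_polyP a c x j : a j != 0 ->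
  trop_hypersurface (hyperplane_poly a c) x <-> int_lin a x = c.
Proof.
move=> aj; rewrite trop_hypersurface2; last by have := int_posD_neq 0 aj; rewrite !addr0.
by rewrite !trop_linE /= -nat_lin_int_posB; split=> e; lra.
Qed.

Definition halfspace_poly a c b d : trop_poly R n :=
  [:: (int_pos a + int_neg b, d); (int_neg a + int_neg b, c + d); (int_pos a + int_pos b, 0)].

Lemma halfspace_polyP a c b d x j : a j != 0 -> int_lin a x = c ->
  trop_hypersurface (halfspace_poly a c b d) x <-> d <= int_lin b x.
Proof.
move=> aj ax; have aE := nat_lin_int_posB a x; have bE := nat_lin_int_posB b x.
rewrite trop_hypersurface3; [|exact: int_posD_neq aj|]; rewrite !trop_linE /= !nat_linD.
  by split=> e; lra.
lra.
Qed.

End IntegerHalfspace.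

Lemma int_lin_eq0 (R : realType) (n : nat) (a : 'I_n -> int) (x : 'rV[R]_n) :
  (forall j, a j = 0) -> int_lin a x = 0.
Proof. by move=> a0; rewrite /int_lin big1 // => j _; rewrite a0 mul0r. Qed.

Lemma int_lin_system_nonzero_rows (R : realType) (n k : nat) (M : 'M[int]_(k, n))
    (c : 'I_k -> R) (x0 x : 'rV[R]_n) :
  (forall i, int_lin (M i) x0 = c i) ->
  (forall i, [exists j, M i j != 0] -> int_lin (M i) x = c i) ->
  forall i, int_lin (M i) x = c i.
Proof.
move=> Mx0 Mx i; have [/Mx //|/existsPn M0] := boolP [exists j, M i j != 0].
by rewrite -(Mx0 i) !int_lin_eq0 // => j; apply/eqP; rewrite -[_ == _]negbK M0.
Qed.

Unset Implicit Arguments.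

Theorem lemma1p1 (R : realType) (n k : nat)
    (M : 'M[int]_(k, n)) (c : 'I_k -> R) (b : 'I_n -> int) (d : R) :
  let A := [set x : 'rV[R]_n | forall i : 'I_k, int_lin (M i) x = c i] in
  A !=set0 ->
  A <> setT ->
  (exists x, A x /\ d < int_lin b x) ->
  (exists x, A x /\ int_lin b x < d) ->
  trop_prevariety [set x | A x /\ d <= int_lin b x].
Proof.
move=> A [x0 Ax0] AT _ _.
pose rows := [seq i <- enum 'I_k | [exists j, M i j != 0]].
have rowsE i : (i \in rows) = [exists j, M i j != 0] by rewrite mem_filter mem_enum andbT.
have AE x : A x <-> forall i, i \in rows -> int_lin (M i) x = c i.
  split=> [Ax i _|Ax]; first exact: Ax.
  by apply: (int_lin_system_nonzero_rows Ax0) => i; rewrite -rowsE; exact: Ax.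
have [r] : exists r, r \in rows.
  apply: contrapT => no_row; apply: AT; apply/seteqP; split=> // x _.
  by apply/AE => i irows; case: no_row; exists i.
rewrite rowsE => /existsP [j Mrj].
have VE x : A x <->
    forall i, i \in rows -> trop_hypersurface (hyperplane_poly (M i) (c i)) x.
  have hypE i : i \in rows ->
      trop_hypersurface (hyperplane_poly (M i) (c i)) x <-> int_lin (M i) x = c i.
    by rewrite rowsE => /existsP [l Mil]; exact: (hyperplane_polyP _ _ Mil).
  split=> [/AE Ax i irows|Vx]; first exact/(hypE i irows)/Ax.
  by apply/AE => i irows; exact/(hypE i irows)/Vx.
have -> : [set x | A x /\ d <= int_lin b x] =
    [set x | forall i, i \in rows -> trop_hypersurface (hyperplane_poly (M i) (c i)) x]
    `&` trop_hypersurface (halfspace_poly (M r) (c r) b d).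
  apply/seteqP; split=> x /=.
    by move=> [Ax dx]; split; [exact/VE | exact/(halfspace_polyP b d Mrj (Ax r))].
  by move=> [/VE Ax Vx]; split=> //; exact/(halfspace_polyP b d Mrj (Ax r)).
apply: trop_prevarietyI; last exact: trop_prevariety_hypersurface.
by apply: trop_prevariety_bigcap => i _; exact: trop_prevariety_hypersurface.
Qed.
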